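(* Let $\eta$ be a homogeneous integrable 2-form of degree two on $\mathbb{C}^4$ with $d\eta\not\equiv0$, let $\nu=dz_1\wedge dz_2\wedge dz_3\wedge dz_4$, and let $X$ be the (linear, trace zero) vector field with $d\eta=i_X\nu$. Assume $\mathrm{codim}(\mathrm{Sing}(X))\ge3$. Then there is a linear vector field $Y$ with $\eta=i_Y i_X\nu$ and $[Y,X]=\lambda X$, where $\lambda=1-\mathrm{tr}(Y)$. Moreover: (a) if $X$ is not nilpotent, then $\lambda=0$ and $\mathrm{tr}(Y)=1$, so $[X,Y]=0$; (b) if $X$ is nilpotent and $\lambda\ne0$, then after a linear change of coordinates $X=z_1\frac{\partial}{\partial z_2}+z_2\frac{\partial}{\partial z_3}+z_3\frac{\partial}{\partial z_4}$ and $Y=\rho z_1\frac{\partial}{\partial z_1}+(\rho-\lambda)z_2\frac{\partial}{\partial z_2}+(\rho-2\lambda)z_3\frac{\partial}{\partial z_3}+(\rho-3\lambda)z_4\frac{\partial}{\partial z_4}$ for some $\rho\in\mathbb{C}$ with $4\rho-5\lambda=1$.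
   Context: A form is homogeneous of degree $m$ if its coefficients (in linear coordinates) are homogeneous polynomials of degree $m$. A linear vector field is identified with its matrix; $\mathrm{tr}$ denotes its trace. $\mathrm{Sing}(X)$ is the zero set of $X$. A holomorphic $q$-form $\eta$ is integrable if every point $p$ outside its zero set has a neighborhood $V$ with holomorphic 1-forms $\omega_1,\dots,\omega_q$ on $V$ such that $\eta|_V=\omega_1\wedge\cdots\wedge\omega_q$ and $d\omega_j\wedge\eta=0$ for all $j$. *)

From Stdlib Require Import Reals.
Open Scope R_scope.

Definition Cplx : Type := (R * R)%type.
Definition RtoC (r : R) : Cplx := (r, 0).
Definition Czero : Cplx := RtoC 0.
Definition Cone : Cplx := RtoC 1.
Definition Cadd (x y : Cplx) : Cplx := (fst x + fst y, snd x + snd y).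
Definition Copp (x : Cplx) : Cplx := (- fst x, - snd x).
Definition Csub (x y : Cplx) : Cplx := Cadd x (Copp y).
Definition Cmul (x y : Cplx) : Cplx :=
  (fst x * fst y - snd x * snd y, fst x * snd y + snd x * fst y).
Definition Cnorm (x : Cplx) : R := sqrt (fst x * fst x + snd x * snd x).

Declare Scope C_scope.
Delimit Scope C_scope with C.
Infix "+" := Cadd : C_scope.
Infix "-" := Csub : C_scope.
Infix "*" := Cmul : C_scope.
Notation "- x" := (Copp x) : C_scope.

(* Coordinates on Cplx^4: index type {1,2,3,4} = {i0,i1,i2,i3}          *)
Inductive I4 : Type := i0 | i1 | i2 | i3.

Definition idx (a : I4) : nat :=
  match a with i0 => 0 | i1 => 1 | i2 => 2 | i3 => 3 end%nat.

Definition sum4 (f : I4 -> Cplx) : Cplx := (f i0 + f i1 + f i2 + f i3)%C.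

Definition vec := I4 -> Cplx.
Definition mat := I4 -> I4 -> Cplx.    (* a linear vector field z |-> A z,
                                       A i j = coefficient of z_j in the
                                       i-th component *)

Definition mapply (A : mat) (z : vec) : vec := fun i => sum4 (fun j => (A i j * z j)%C).
Definition mmul (A B : mat) : mat := fun i j => sum4 (fun k => (A i k * B k j)%C).
Definition mid : mat := fun i j => if Nat.eqb (idx i) (idx j) then Cone else Czero.
Definition mzero : mat := fun _ _ => Czero.
Fixpoint mpow (A : mat) (n : nat) : mat :=
  match n with O => mid | S n => mmul A (mpow A n) end.
Definition trace (A : mat) : Cplx := sum4 (fun i => A i i).
Definition basis (a : I4) : vec := fun i => if Nat.eqb (idx i) (idx a) then Cone else Czero.

Definition nilpotent (A : mat) : Prop := exists n : nat, mpow A n = mzero.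

(* Lie bracket of linear vector fields Y(z) = Y z, X(z) = X z:
   [Y,X](z) = DX(z) Y(z) - DY(z) X(z) = (X Y - Y X) z. *)
Definition lie_lin (Y X : mat) : mat := fun i j => (mmul X Y i j - mmul Y X i j)%C.

Definition Sing (X : mat) : vec -> Prop := fun z => forall i, mapply X z i = Czero.

(* For a linear subspace S of Cplx^4 (such as Sing X),
   codim S >= 3  <->  dim S <= 1  <->  S is contained in a line. *)
Definition codim_ge3 (S : vec -> Prop) : Prop :=
  exists w : vec, forall z, S z -> exists c : Cplx, forall i, z i = (c * w i)%C.

(* Volume form nu = dz1 ^ dz2 ^ dz3 ^ dz4 via the Levi-Civita symbol *)
Definition inv_b (a b : I4) : nat := if Nat.ltb (idx b) (idx a) then 1%nat else 0%nat.
Definition distinct4 (a b c d : I4) : bool :=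
  negb (Nat.eqb (idx a) (idx b) || Nat.eqb (idx a) (idx c) || Nat.eqb (idx a) (idx d)
        || Nat.eqb (idx b) (idx c) || Nat.eqb (idx b) (idx d) || Nat.eqb (idx c) (idx d)).
Definition eps4 (a b c d : I4) : Cplx :=
  if distinct4 a b c d then
    if Nat.even (inv_b a b + inv_b a c + inv_b a d + inv_b b c + inv_b b d + inv_b c d)
    then Cone else Copp Cone
  else Czero.

Definition nu (u v w x : vec) : Cplx :=
  sum4 (fun a => sum4 (fun b => sum4 (fun c => sum4 (fun d =>
    (eps4 a b c d * u a * v b * w c * x d)%C)))).

(* Forms are given by their components on the coordinate basis:
   a 2-form eta is eta a b z = eta_z(e_a, e_b); a 3-form similarly. *)
Definition form2 := I4 -> I4 -> vec -> Cplx.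
Definition form3 := I4 -> I4 -> I4 -> vec -> Cplx.

Definition iX_nu (X : mat) : form3 :=
  fun a b c z => nu (mapply X z) (basis a) (basis b) (basis c).
(* i_Y i_X nu = (i_X nu)(Y, ., .) = nu(X, Y, ., .) *)
Definition iY_iX_nu (Y X : mat) : form2 :=
  fun a b z => nu (mapply X z) (mapply Y z) (basis a) (basis b).

(* Homogeneous 2-forms of degree two: components
   eta_{ab}(z) = sum_{k,l} c a b k l z_k z_l, with c antisymmetric in a b. *)
Definition coef2 := I4 -> I4 -> I4 -> I4 -> Cplx.
Definition quad_form (c : coef2) : form2 :=
  fun a b z => sum4 (fun k => sum4 (fun l => (c a b k l * z k * z l)%C)).
Definition alternating_coef (c : coef2) : Prop :=
  forall a b k l, c a b k l = Copp (c b a k l).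

(* partial derivative d/dz_a of the polynomial component eta_{bc} *)
Definition dquad (c : coef2) (a b d : I4) (z : vec) : Cplx :=
  sum4 (fun l => ((c b d a l + c b d l a) * z l)%C).
Definition d_quad (c : coef2) : form3 :=
  fun a b d z => (dquad c a b d z - dquad c b a d z + dquad c d a b z)%C.

Definition vadd (z w : vec) : vec := fun i => (z i + w i)%C.
Definition vscale (h : Cplx) (w : vec) : vec := fun i => (h * w i)%C.

Definition has_partial (f : vec -> Cplx) (i : I4) (z : vec) (l : Cplx) : Prop :=
  forall e : R, 0 < e -> exists dl : R, 0 < dl /\
    forall h : Cplx, 0 < Cnorm h < dl ->
      Cnorm (f (vadd z (vscale h (basis i))) - f z - h * l)%C <= e * Cnorm h.

Definition polydisc (p : vec) (r : R) : vec -> Prop :=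
  fun z => forall i, Cnorm (z i - p i)%C < r.
Definition open_set (V : vec -> Prop) : Prop :=
  forall z, V z -> exists r, 0 < r /\ forall w, polydisc z r w -> V w.

(* holomorphic on an open set = complex differentiable in each variable
   at each point (equivalent to holomorphy by Hartogs' theorem) *)
Definition holo_on (V : vec -> Prop) (f : vec -> Cplx) : Prop :=
  forall z, V z -> forall i, exists l, has_partial f i z l.

Definition form1 := I4 -> vec -> Cplx.
Definition wedge11 (w1 w2 : form1) : form2 :=
  fun a b z => (w1 a z * w2 b z - w1 b z * w2 a z)%C.
Definition wedge22 (al be : I4 -> I4 -> Cplx) : Cplx :=
  (RtoC (/4) * sum4 (fun a => sum4 (fun b => sum4 (fun c => sum4 (fun d =>
     eps4 a b c d * al a b * be c d)))))%C.

(* Integrability of a holomorphic 2-form (q = 2 case of the definition):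
   outside the zero set, locally eta = w1 ^ w2 with holomorphic 1-forms w_j
   satisfying d w_j ^ eta = 0.  Here (d w)(e_a,e_b) = d_a w_b - d_b w_a. *)
Definition integrable2 (eta : form2) : Prop :=
  forall p : vec, (exists a b, eta a b p <> Czero) ->
  exists (V : vec -> Prop) (w1 w2 : form1),
    open_set V /\ V p /\
    (forall a, holo_on V (w1 a)) /\ (forall a, holo_on V (w2 a)) /\
    (forall z, V z -> forall a b, eta a b z = wedge11 w1 w2 a b z) /\
    (forall z, V z -> forall (w : form1), (w = w1 \/ w = w2) ->
       forall D : I4 -> I4 -> Cplx,
       (forall a b, has_partial (w b) a z (D a b)) ->
       wedge22 (fun a b => D a b - D b a)%C (fun a b => eta a b z) = Czero).

Definition Nshift : mat := fun i j =>
  match i, j with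
  | i1, i0 | i2, i1 | i3, i2 => Cone
  | _, _ => Czero
  end.
Definition Ydiag (rho lam : Cplx) : mat := fun i j =>
  if Nat.eqb (idx i) (idx j)
  then (rho - RtoC (INR (idx i)) * lam)%C
  else Czero.

(* Integrability of [eta = w1 ^ w2] together with [d eta = i_X nu] forces
   [w_j(X) = 0], hence [i_X eta = 0].  As [X] has rank at least 3, a weighted
   Euler–Cartan homotopy in rank normal form divides [eta] by [X]:
   [eta = i_Y i_X nu] with [Y] linear.  Then [d (i_Y i_X nu) = i_W nu] with
   [W = tr(Y) X - tr(X) Y + [X, Y]], so [d eta = i_X nu] gives [tr X = 0] and
   [[Y, X] = (1 - tr Y) X].  If [lam = 1 - tr Y <> 0], every [tr X^k] vanishes
   and [X] is nilpotent by Cayley–Hamilton; rank [>= 3] gives [X^3 <> 0], and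
   since [X] shifts the eigenvalues of [Y] by [-lam], an eigenvector of [Y]
   generating a Jordan chain of [X] yields the normal form, with
   [tr Y = 4 rho - 6 lam]. *)

From Stdlib Require Import Reals Lra Lia Psatz Ring Field.
From Stdlib Require Import Classical ClassicalEpsilon FunctionalExtensionality.
Open Scope R_scope.

(** * Complex numbers and linear algebra on C^4 *)

Lemma Cplx_eq (x y : Cplx) : fst x = fst y -> snd x = snd y -> x = y.
Proof. destruct x, y; simpl; intros; subst; reflexivity. Qed.

Definition Cinv (x : Cplx) : Cplx :=
  let n := fst x * fst x + snd x * snd x in (fst x / n, - snd x / n).
Definition Cdiv (x y : Cplx) : Cplx := Cmul x (Cinv y).

Lemma Cring_theory : ring_theory Czero Cone Cadd Cmul Csub Copp (@eq Cplx).
Proof.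
  constructor; intros; apply Cplx_eq; unfold Cadd, Cmul, Csub, Copp, Czero, Cone, RtoC;
  destruct x; try destruct y; try destruct z; simpl; ring.
Qed.

Lemma Cfield_theory : field_theory Czero Cone Cadd Cmul Csub Copp Cdiv Cinv (@eq Cplx).
Proof.
  constructor; [exact Cring_theory | | reflexivity |].
  - unfold Cone, Czero, RtoC; intro H; injection H; lra.
  - intros [a b] H. assert (Hn : a * a + b * b <> 0).
    { intro E. apply H. assert (a = 0) by nra. assert (b = 0) by nra. subst; reflexivity. }
    apply Cplx_eq; unfold Cmul, Cinv, Cone, RtoC; simpl; field; exact Hn.
Qed.

Add Field Cfield : Cfield_theory.

Local Open Scope C_scope.

Fixpoint Cnat (n : nat) : Cplx := match n with O => Czero | S m => Cone + Cnat m end.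

Lemma Cnat_RtoC n : Cnat n = RtoC (INR n).
Proof.
  induction n as [|n IH]; [reflexivity|]. simpl Cnat. rewrite IH, S_INR.
  apply Cplx_eq; unfold Cadd, Cone, RtoC; simpl; ring.
Qed.

Lemma Cnat_neq0 n : n <> O -> Cnat n <> Czero.
Proof.
  intros Hn E. rewrite Cnat_RtoC in E. injection E. intro. apply Hn, INR_eq. simpl. lra.
Qed.

Lemma Cmul_reg_l a x y : a <> Czero -> a * x = a * y -> x = y.
Proof.
  intros Ha E. transitivity (Cinv a * (a * x)); [field; exact Ha|].
  rewrite E. field. exact Ha.
Qed.

Lemma Cmul_eq0_reg_l a x : a <> Czero -> a * x = Czero -> x = Czero.
Proof. intros Ha E. apply (Cmul_reg_l a); [exact Ha | rewrite E; ring]. Qed.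

Lemma Csub_eq0 x y : x - y = Czero -> x = y.
Proof. intro H. transitivity (x - y + y); [ring | rewrite H; ring]. Qed.

Lemma RtoC_mul r s : RtoC (r * s) = RtoC r * RtoC s.
Proof. apply Cplx_eq; unfold Cmul, RtoC; simpl; ring. Qed.

Lemma sum4_ext f g : (forall i, f i = g i) -> sum4 f = sum4 g.
Proof. intro H. unfold sum4. rewrite !H. reflexivity. Qed.

Lemma sum4_comm (F : I4 -> I4 -> Cplx) :
  sum4 (fun k => sum4 (fun e => F k e)) = sum4 (fun e => sum4 (fun k => F k e)).
Proof. unfold sum4. ring. Qed.

Lemma sum4_comm22 (F : I4 -> I4 -> I4 -> I4 -> Cplx) :
  sum4 (fun k => sum4 (fun l => sum4 (fun e => sum4 (fun f => F k l e f)))) =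
  sum4 (fun e => sum4 (fun f => sum4 (fun k => sum4 (fun l => F k l e f)))).
Proof.
  transitivity (sum4 (fun k => sum4 (fun e => sum4 (fun l => sum4 (fun f => F k l e f))))).
  { apply sum4_ext; intro k. apply sum4_comm. }
  rewrite sum4_comm. apply sum4_ext; intro e.
  transitivity (sum4 (fun k => sum4 (fun f => sum4 (fun l => F k l e f)))).
  { apply sum4_ext; intro k. apply sum4_comm. }
  apply sum4_comm.
Qed.

Definition vzero : vec := fun _ => Czero.

Ltac mat_ext i j := apply functional_extensionality; intro i; apply functional_extensionality; intro j.

Lemma mapply_mmul A B z : mapply (mmul A B) z = mapply A (mapply B z).
Proof. apply functional_extensionality; intro i. unfold mapply, mmul, sum4. ring. Qed.

Lemma mapply_mid z : mapply mid z = z.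
Proof. apply functional_extensionality; intro i. destruct i; unfold mapply, mid, sum4; simpl; ring. Qed.

Lemma mapply_basis (M : mat) a : mapply M (basis a) = fun i => M i a.
Proof. apply functional_extensionality; intro i. destruct a; unfold mapply, basis, sum4; simpl; ring. Qed.

Lemma mapply_vzero M : mapply M vzero = vzero.
Proof. apply functional_extensionality; intro i. unfold mapply, vzero, sum4. ring. Qed.

Lemma mmul_assoc A B C : mmul A (mmul B C) = mmul (mmul A B) C.
Proof. mat_ext i j. unfold mmul, sum4. ring. Qed.

Lemma mmul_mid_l A : mmul mid A = A.
Proof. mat_ext i j. destruct i; unfold mmul, mid, sum4; simpl; ring. Qed.

Lemma mmul_mid_r A : mmul A mid = A.
Proof. mat_ext i j. destruct j; unfold mmul, mid, sum4; simpl; ring. Qed.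

Lemma trace_mmulC A B : trace (mmul A B) = trace (mmul B A).
Proof. unfold trace, mmul, sum4. ring. Qed.

(* The Leibniz expansion of [nu]; [ring] handles it far better than the
   256-term sum defining [nu]. *)
Definition detv (u v w x : vec) : Cplx :=
    u i0 * v i1 * w i2 * x i3 - u i0 * v i1 * w i3 * x i2 - u i0 * v i2 * w i1 * x i3
  + u i0 * v i2 * w i3 * x i1 + u i0 * v i3 * w i1 * x i2 - u i0 * v i3 * w i2 * x i1
  - u i1 * v i0 * w i2 * x i3 + u i1 * v i0 * w i3 * x i2 + u i1 * v i2 * w i0 * x i3
  - u i1 * v i2 * w i3 * x i0 - u i1 * v i3 * w i0 * x i2 + u i1 * v i3 * w i2 * x i0
  + u i2 * v i0 * w i1 * x i3 - u i2 * v i0 * w i3 * x i1 - u i2 * v i1 * w i0 * x i3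
  + u i2 * v i1 * w i3 * x i0 + u i2 * v i3 * w i0 * x i1 - u i2 * v i3 * w i1 * x i0
  - u i3 * v i0 * w i1 * x i2 + u i3 * v i0 * w i2 * x i1 + u i3 * v i1 * w i0 * x i2
  - u i3 * v i1 * w i2 * x i0 - u i3 * v i2 * w i0 * x i1 + u i3 * v i2 * w i1 * x i0.

Lemma nu_detv u v w x : nu u v w x = detv u v w x.
Proof. unfold nu, sum4, detv, eps4. simpl. ring. Qed.

Definition nu2 (u v : vec) (a b : I4) : Cplx :=
  sum4 (fun c => sum4 (fun d => eps4 c d a b * u c * v d)).
Definition nu3 (u : vec) (a b c : I4) : Cplx := sum4 (fun d => eps4 d a b c * u d).

Lemma nu_basis2 u v a b : nu u v (basis a) (basis b) = nu2 u v a b.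
Proof. rewrite nu_detv; destruct a, b; unfold detv, nu2, basis, sum4, eps4; simpl; ring. Qed.

Lemma nu_basis3 u a b c : nu u (basis a) (basis b) (basis c) = nu3 u a b c.
Proof. rewrite nu_detv; destruct a, b, c; unfold detv, nu3, basis, sum4, eps4; simpl; ring. Qed.

Local Close Scope C_scope.

(** * Partial derivatives *)

Lemma Cnorm_nonneg x : 0 <= Cnorm x.
Proof. apply sqrt_pos. Qed.

Lemma Cnorm_mul x y : Cnorm (Cmul x y) = Cnorm x * Cnorm y.
Proof.
  destruct x as [a b], y as [c d]; unfold Cnorm, Cmul; simpl.
  rewrite <- sqrt_mult by nra. f_equal. ring.
Qed.

Lemma Cnorm_add_le x y : Cnorm (Cadd x y) <= Cnorm x + Cnorm y.
Proof.
  destruct x as [a b], y as [c d].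
  pose proof (triangle (a + c) (b + d) 0 0 c d) as T.
  unfold dist_euc, Rsqr in T. unfold Cnorm, Cadd; simpl.
  replace ((a + c - c) * (a + c - c) + (b + d - d) * (b + d - d)) with (a * a + b * b) in T by ring.
  replace ((c - 0) * (c - 0) + (d - 0) * (d - 0)) with (c * c + d * d) in T by ring.
  replace ((a + c - 0) * (a + c - 0) + (b + d - 0) * (b + d - 0))
    with ((a + c) * (a + c) + (b + d) * (b + d)) in T by ring.
  exact T.
Qed.

Lemma Cnorm_sub_le x y : Cnorm (Csub x y) <= Cnorm x + Cnorm y.
Proof.
  replace (Cnorm y) with (Cnorm (Copp y)) by (destruct y; unfold Cnorm, Copp; simpl; f_equal; ring).
  apply Cnorm_add_le.
Qed.

Lemma Cnorm_eq0 x : Cnorm x = 0 -> x = Czero.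
Proof.
  destruct x as [a b]; unfold Cnorm; simpl. intro H. apply sqrt_eq_0 in H; [|nra].
  apply Cplx_eq; simpl; nra.
Qed.

Lemma Cnorm_RtoC r : 0 <= r -> Cnorm (RtoC r) = r.
Proof. intro H. unfold Cnorm, RtoC; simpl. rewrite Rmult_0_l, Rplus_0_r. apply sqrt_square, H. Qed.

Lemma has_partial_unique f i z l1 l2 :
  has_partial f i z l1 -> has_partial f i z l2 -> l1 = l2.
Proof.
  intros H1 H2. set (m := Cnorm (Csub l1 l2)).
  destruct (Req_dec m 0) as [E|E].
  { apply Cnorm_eq0 in E. transitivity (Cadd (Csub l1 l2) l2); [ring|]. rewrite E. ring. }
  assert (Hm : 0 < m) by (pose proof (Cnorm_nonneg (Csub l1 l2)); unfold m in *; lra).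
  destruct (H1 (m / 4) ltac:(lra)) as [d1 [Hd1 P1]].
  destruct (H2 (m / 4) ltac:(lra)) as [d2 [Hd2 P2]].
  set (r := Rmin d1 d2 / 2).
  assert (Hr : 0 < r) by (apply Rdiv_lt_0_compat; [apply Rmin_glb_lt|]; lra).
  assert (r < d1 /\ r < d2) as [Hr1 Hr2] by (pose proof (Rmin_l d1 d2); pose proof (Rmin_r d1 d2); unfold r; lra).
  assert (Hh : Cnorm (RtoC r) = r) by (apply Cnorm_RtoC; lra).
  specialize (P1 (RtoC r) ltac:(lra)). specialize (P2 (RtoC r) ltac:(lra)).
  set (w := vadd z (vscale (RtoC r) (basis i))) in *.
  pose proof (Cnorm_sub_le (Csub (Csub (f w) (f z)) (Cmul (RtoC r) l2))
                           (Csub (Csub (f w) (f z)) (Cmul (RtoC r) l1))) as T.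
  replace (Csub (Csub (Csub (f w) (f z)) (Cmul (RtoC r) l2)) (Csub (Csub (f w) (f z)) (Cmul (RtoC r) l1)))
    with (Cmul (RtoC r) (Csub l1 l2)) in T by ring.
  rewrite Cnorm_mul, Hh in T. fold m in T. nra.
Qed.

Lemma has_partial_local f g i z l r : 0 < r ->
  (forall h, Cnorm h < r -> f (vadd z (vscale h (basis i))) = g (vadd z (vscale h (basis i)))) ->
  has_partial g i z l -> has_partial f i z l.
Proof.
  intros Hr Hfg Hg e He. destruct (Hg e He) as [d [Hd P]].
  assert (Hz : vadd z (vscale Czero (basis i)) = z).
  { apply functional_extensionality; intro a. unfold vadd, vscale. ring. }
  assert (Hfz : f z = g z).
  { rewrite <- Hz. apply Hfg. unfold Czero. rewrite Cnorm_RtoC; lra. }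
  pose proof (Rmin_l d r). pose proof (Rmin_r d r).
  exists (Rmin d r). split; [apply Rmin_glb_lt; lra|].
  intros h Hh. rewrite Hfz, Hfg by lra. apply P. lra.
Qed.

Lemma has_partial_sub f g i z l1 l2 :
  has_partial f i z l1 -> has_partial g i z l2 ->
  has_partial (fun w => Csub (f w) (g w)) i z (Csub l1 l2).
Proof.
  intros H1 H2 e He. destruct (H1 (e / 2) ltac:(lra)) as [d1 [Hd1 P1]].
  destruct (H2 (e / 2) ltac:(lra)) as [d2 [Hd2 P2]].
  pose proof (Rmin_l d1 d2). pose proof (Rmin_r d1 d2).
  exists (Rmin d1 d2). split; [apply Rmin_glb_lt; lra|].
  intros h Hh. set (w := vadd z (vscale h (basis i))).
  specialize (P1 h ltac:(lra)). specialize (P2 h ltac:(lra)). fold w in P1, P2.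
  replace (Csub (Csub (Csub (f w) (g w)) (Csub (f z) (g z))) (Cmul h (Csub l1 l2)))
    with (Csub (Csub (Csub (f w) (f z)) (Cmul h l1)) (Csub (Csub (g w) (g z)) (Cmul h l2))) by ring.
  pose proof (Cnorm_sub_le (Csub (Csub (f w) (f z)) (Cmul h l1)) (Csub (Csub (g w) (g z)) (Cmul h l2))).
  lra.
Qed.

Lemma has_partial_increment f i z l : has_partial f i z l ->
  exists d, 0 < d /\ forall h, 0 < Cnorm h < d ->
    Cnorm (Csub (f (vadd z (vscale h (basis i)))) (f z)) <= (Cnorm l + 1) * Cnorm h.
Proof.
  intro H. destruct (H 1 ltac:(lra)) as [d [Hd P]]. exists d. split; [exact Hd|].
  intros h Hh. specialize (P h Hh).
  set (Df := Csub (f (vadd z (vscale h (basis i)))) (f z)) in *.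
  pose proof (Cnorm_add_le (Csub Df (Cmul h l)) (Cmul h l)) as T.
  replace (Cadd (Csub Df (Cmul h l)) (Cmul h l)) with Df in T by ring.
  rewrite Cnorm_mul in T. nra.
Qed.

Lemma has_partial_mul f g i z l1 l2 :
  has_partial f i z l1 -> has_partial g i z l2 ->
  has_partial (fun w => Cmul (f w) (g w)) i z (Cadd (Cmul l1 (g z)) (Cmul (f z) l2)).
Proof.
  intros H1 H2 e He.
  set (a := Cnorm (f z)). set (b := Cnorm (g z)).
  set (p := Cnorm l1 + 1). set (q := Cnorm l2 + 1).
  assert (0 <= a /\ 0 <= b /\ 1 <= p /\ 1 <= q) as (Ha & Hb & Hp & Hq)
    by (unfold a, b, p, q; repeat split; try apply Cnorm_nonneg;
        pose proof (Cnorm_nonneg l1); pose proof (Cnorm_nonneg l2); lra).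
  set (e1 := e / (3 * (b + 1))). set (e2 := e / (3 * (a + 1))). set (d3 := e / (3 * p * q)).
  assert (E1 : e1 * (b + 1) = e / 3) by (unfold e1; field; lra).
  assert (E2 : e2 * (a + 1) = e / 3) by (unfold e2; field; lra).
  assert (E3 : d3 * (p * q) = e / 3) by (unfold d3; field; lra).
  assert (0 < e1 /\ 0 < e2 /\ 0 < d3) as (He1 & He2 & Hd3)
    by (unfold e1, e2, d3; repeat split; apply Rdiv_lt_0_compat; nra).
  destruct (H1 e1 He1) as [d1 [Hd1 P1]]. destruct (H2 e2 He2) as [d2 [Hd2 P2]].
  destruct (has_partial_increment f i z l1 H1) as [d4 [Hd4 P4]].
  destruct (has_partial_increment g i z l2 H2) as [d5 [Hd5 P5]].
  set (d := Rmin (Rmin d1 d2) (Rmin d3 (Rmin d4 d5))).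
  assert (d <= d1 /\ d <= d2 /\ d <= d3 /\ d <= d4 /\ d <= d5) as (L1 & L2 & L3 & L4 & L5).
  { unfold d. pose proof (Rmin_l (Rmin d1 d2) (Rmin d3 (Rmin d4 d5))).
    pose proof (Rmin_r (Rmin d1 d2) (Rmin d3 (Rmin d4 d5))).
    pose proof (Rmin_l d1 d2). pose proof (Rmin_r d1 d2). pose proof (Rmin_l d3 (Rmin d4 d5)).
    pose proof (Rmin_r d3 (Rmin d4 d5)). pose proof (Rmin_l d4 d5). pose proof (Rmin_r d4 d5). lra. }
  exists d. split; [unfold d; repeat apply Rmin_glb_lt; lra|].
  intros h Hh. set (w := vadd z (vscale h (basis i))).
  specialize (P1 h ltac:(lra)). specialize (P2 h ltac:(lra)).
  specialize (P4 h ltac:(lra)). specialize (P5 h ltac:(lra)). fold w in P1, P2, P4, P5.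
  set (Rf := Csub (Csub (f w) (f z)) (Cmul h l1)) in *.
  set (Rg := Csub (Csub (g w) (g z)) (Cmul h l2)) in *.
  replace (Csub (Csub (Cmul (f w) (g w)) (Cmul (f z) (g z))) (Cmul h (Cadd (Cmul l1 (g z)) (Cmul (f z) l2))))
    with (Cadd (Cadd (Cmul Rf (g z)) (Cmul (f z) Rg)) (Cmul (Csub (f w) (f z)) (Csub (g w) (g z))))
    by (unfold Rf, Rg; ring).
  pose proof (Cnorm_add_le (Cadd (Cmul Rf (g z)) (Cmul (f z) Rg)) (Cmul (Csub (f w) (f z)) (Csub (g w) (g z)))) as N1.
  pose proof (Cnorm_add_le (Cmul Rf (g z)) (Cmul (f z) Rg)) as N2.
  rewrite Cnorm_mul in N1. rewrite !Cnorm_mul in N2. fold a b in N2. fold p q in P4, P5.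
  set (nh := Cnorm h) in *.
  assert (T1 : Cnorm Rf * b <= e / 3 * nh) by (pose proof (Cnorm_nonneg Rf); nra).
  assert (T2 : a * Cnorm Rg <= e / 3 * nh) by (pose proof (Cnorm_nonneg Rg); nra).
  assert (T3 : Cnorm (Csub (f w) (f z)) * Cnorm (Csub (g w) (g z)) <= e / 3 * nh).
  { pose proof (Cnorm_nonneg (Csub (f w) (f z))). pose proof (Cnorm_nonneg (Csub (g w) (g z))).
    assert (Hpq : nh * (p * q) <= e / 3) by (rewrite <- E3; apply Rmult_le_compat_r; nra).
    apply Rle_trans with ((p * nh) * (q * nh)); [apply Rmult_le_compat; lra | nra]. }
  lra.
Qed.

Lemma has_partial_quad_form c b d i z : has_partial (quad_form c b d) i z (dquad c i b d z).
Proof.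
  intros e He. set (m := Cnorm (c b d i i)).
  assert (Hm : 0 <= m) by apply Cnorm_nonneg.
  exists (e / (m + 1)). split; [apply Rdiv_lt_0_compat; lra|].
  intros h Hh.
  replace (Csub (Csub (quad_form c b d (vadd z (vscale h (basis i)))) (quad_form c b d z)) (Cmul h (dquad c i b d z)))
    with (Cmul (Cmul h h) (c b d i i))
    by (destruct i; unfold quad_form, dquad, vadd, vscale, basis, sum4; simpl; ring).
  rewrite !Cnorm_mul. fold m.
  assert (E : e / (m + 1) * (m + 1) = e) by (field; lra).
  pose proof (Cnorm_nonneg h).
  assert (Cnorm h * m <= e) by (rewrite <- E; apply Rle_trans with (Cnorm h * (m + 1)); nra).
  nra.
Qed.

Lemma polydisc_axis z r h i : Cnorm h < r -> polydisc z r (vadd z (vscale h (basis i))).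
Proof.
  intros H j. unfold vadd, vscale.
  replace (Csub (Cadd (z j) (Cmul h (basis i j))) (z j)) with (Cmul h (basis i j)) by ring.
  rewrite Cnorm_mul. unfold basis. destruct (Nat.eqb (idx j) (idx i)); unfold Cone, Czero;
  rewrite Cnorm_RtoC; pose proof (Cnorm_nonneg h); lra.
Qed.

Lemma holo_on_jacobian (V : vec -> Prop) (w : form1) p : V p -> (forall a, holo_on V (w a)) ->
  exists A : I4 -> I4 -> Cplx, forall i a, has_partial (w a) i p (A i a).
Proof.
  intros Hp Hh.
  assert (H : forall ia : I4 * I4, exists l, has_partial (w (snd ia)) (fst ia) p l)
    by (intros [i a]; exact (Hh a p Hp i)).
  exists (fun i a => proj1_sig (constructive_indefinite_description _ (H (i, a)))).
  intros i a. exact (proj2_sig (constructive_indefinite_description _ (H (i, a)))).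
Qed.

Local Open Scope C_scope.

(** * Integrability forces [i_X eta = 0] *)

(* [dwedge x y A B] is [d (w1 ^ w2)] at a point where [w1 = x], [w2 = y] and
   the Jacobians are [A i a = d_i w1_a], [B i a = d_i w2_a]. *)
Definition dwedge_partial (x y : vec) (A B : I4 -> I4 -> Cplx) (i b d : I4) : Cplx :=
  A i b * y d + x b * B i d - (A i d * y b + x d * B i b).
Definition dwedge x y A B (a b d : I4) : Cplx :=
  dwedge_partial x y A B a b d - dwedge_partial x y A B b a d + dwedge_partial x y A B d a b.

Lemma has_partial_wedge11 (w1 w2 : form1) (A B : I4 -> I4 -> Cplx) p i b d :
  (forall i a, has_partial (w1 a) i p (A i a)) -> (forall i a, has_partial (w2 a) i p (B i a)) ->
  has_partial (fun z => wedge11 w1 w2 b d z) i p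
    (dwedge_partial (fun a => w1 a p) (fun a => w2 a p) A B i b d).
Proof.
  intros HA HB. unfold wedge11, dwedge_partial.
  replace (A i b * w2 d p + w1 b p * B i d - (A i d * w2 b p + w1 d p * B i b))
    with (Csub (Cadd (Cmul (A i b) (w2 d p)) (Cmul (w1 b p) (B i d)))
               (Cadd (Cmul (A i d) (w2 b p)) (Cmul (w1 d p) (B i b)))) by ring.
  apply (has_partial_sub (fun z => w1 b z * w2 d z) (fun z => w1 d z * w2 b z));
  apply has_partial_mul; auto.
Qed.

Definition wedge31 (T : I4 -> I4 -> I4 -> Cplx) (u : vec) : Cplx :=
  u i0 * T i1 i2 i3 - u i1 * T i0 i2 i3 + u i2 * T i0 i1 i3 - u i3 * T i0 i1 i2.

Lemma wedge31_nu3 x u : wedge31 (nu3 x) u = sum4 (fun a => u a * x a).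
Proof. unfold wedge31, nu3, sum4, eps4. simpl. ring. Qed.

(* [wedge22] carries the factor [RtoC (/ 4)], an atom for [ring]. *)
Lemma quarter_Cnat4 : RtoC (/ 4) * Cnat 4 = Cone.
Proof. apply Cplx_eq; unfold Cmul, RtoC, Cone; simpl; field. Qed.

Lemma wedge31_dwedge_l x y A B :
  wedge31 (dwedge x y A B) x = wedge22 (fun a b => A a b - A b a) (fun a b => x a * y b - x b * y a).
Proof.
  transitivity (RtoC (/ 4) * Cnat 4 * wedge31 (dwedge x y A B) x); [rewrite quarter_Cnat4; ring|].
  unfold wedge22, wedge31, dwedge, dwedge_partial, sum4, eps4. simpl. ring.
Qed.

Lemma wedge31_dwedge_r x y A B :
  wedge31 (dwedge x y A B) y = wedge22 (fun a b => B a b - B b a) (fun a b => x a * y b - x b * y a).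
Proof.
  transitivity (RtoC (/ 4) * Cnat 4 * wedge31 (dwedge x y A B) y); [rewrite quarter_Cnat4; ring|].
  unfold wedge22, wedge31, dwedge, dwedge_partial, sum4, eps4. simpl. ring.
Qed.

Lemma wedge11_interior_zero (w1 w2 : form1) (x : vec) p d :
  sum4 (fun a => w1 a p * x a) = Czero -> sum4 (fun a => w2 a p * x a) = Czero ->
  sum4 (fun a => x a * wedge11 w1 w2 a d p) = Czero.
Proof.
  intros H1 H2.
  transitivity (sum4 (fun a => w1 a p * x a) * w2 d p - sum4 (fun a => w2 a p * x a) * w1 d p);
  [unfold sum4, wedge11; ring | rewrite H1, H2; ring].
Qed.

(* Where [eta = w1 ^ w2 <> 0], [w_j(X) nu = d eta ^ w_j = +- dw_j ^ eta = 0]. *)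
Theorem integrable_interior_zero (c : coef2) (X : mat)
  (Hint : integrable2 (quad_form c))
  (HX : forall a b d z, d_quad c a b d z = iX_nu X a b d z) :
  forall z d, sum4 (fun a => mapply X z a * quad_form c a d z) = Czero.
Proof.
  intros p d.
  destruct (classic (exists a b, quad_form c a b p <> Czero)) as [Hne|Hzero].
  2:{ transitivity (sum4 (fun a => mapply X p a * Czero)); [|unfold sum4; ring].
      apply sum4_ext; intro a. f_equal. apply NNPP. intro. apply Hzero. eauto. }
  destruct (Hint p Hne) as (V & w1 & w2 & HV & Hp & Hw1 & Hw2 & Heq & Hdw).
  destruct (holo_on_jacobian V w1 p Hp Hw1) as [A HA].
  destruct (holo_on_jacobian V w2 p Hp Hw2) as [B HB].
  destruct (HV p Hp) as [r [Hr Hdisc]].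
  set (x := fun a => w1 a p). set (y := fun a => w2 a p).
  assert (Hdeta : forall a b d, d_quad c a b d p = dwedge x y A B a b d).
  { assert (Hpart : forall i b d, dquad c i b d p = dwedge_partial x y A B i b d).
    { intros i b d'. apply (has_partial_unique (quad_form c b d') i p).
      - apply has_partial_quad_form.
      - apply (has_partial_local _ (wedge11 w1 w2 b d') i p _ r Hr).
        + intros h Hh. apply Heq, Hdisc, polydisc_axis, Hh.
        + apply has_partial_wedge11; assumption. }
    intros. unfold d_quad, dwedge. rewrite !Hpart. reflexivity. }
  assert (Heta : (fun a b => x a * y b - x b * y a) = (fun a b => quad_form c a b p)).
  { apply functional_extensionality; intro a; apply functional_extensionality; intro b.
    symmetry. apply Heq, Hp. }
  assert (Hcontr : forall u, sum4 (fun a => u a * mapply X p a) = wedge31 (dwedge x y A B) u).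
  { intro u. rewrite <- wedge31_nu3. unfold wedge31.
    rewrite <- !Hdeta, !HX. unfold iX_nu. rewrite !nu_basis3. reflexivity. }
  transitivity (sum4 (fun a => mapply X p a * wedge11 w1 w2 a d p)).
  { apply sum4_ext; intro a. rewrite Heq by exact Hp. reflexivity. }
  apply wedge11_interior_zero.
  - change (sum4 (fun a => x a * mapply X p a) = Czero).
    rewrite Hcontr, wedge31_dwedge_l, Heta. apply (Hdw p Hp w1 (or_introl eq_refl)). exact HA.
  - change (sum4 (fun a => y a * mapply X p a) = Czero).
    rewrite Hcontr, wedge31_dwedge_r, Heta. apply (Hdw p Hp w2 (or_intror eq_refl)). exact HB.
Qed.

(** * Division of [eta] by a field of rank at least 3 *)

Definition trilinear (T : I4 -> I4 -> I4 -> Cplx) (u v w : vec) : Cplx :=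
  sum4 (fun k => sum4 (fun l => sum4 (fun m => T k l m * u k * v l * w m))).

Lemma trilinear_polarization T u v w :
  trilinear T (vadd u (vadd v w)) (vadd u (vadd v w)) (vadd u (vadd v w))
  - trilinear T (vadd u v) (vadd u v) (vadd u v) - trilinear T (vadd u w) (vadd u w) (vadd u w)
  - trilinear T (vadd v w) (vadd v w) (vadd v w) + trilinear T u u u + trilinear T v v v + trilinear T w w w
  = trilinear T u v w + trilinear T u w v + trilinear T v u w + trilinear T v w u + trilinear T w u v + trilinear T w v u.
Proof. unfold trilinear, vadd, sum4. ring. Qed.

Lemma trilinear_basis T k l m : trilinear T (basis k) (basis l) (basis m) = T k l m.
Proof. destruct k, l, m; unfold trilinear, basis, sum4; simpl; ring. Qed.

Definition sym6 (T : I4 -> I4 -> I4 -> Cplx) k l m :=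
  T k l m + T k m l + T l k m + T l m k + T m k l + T m l k.

Lemma trilinear_diag_zero_sym6 T : (forall z, trilinear T z z z = Czero) -> forall k l m, sym6 T k l m = Czero.
Proof.
  intros H k l m. pose proof (trilinear_polarization T (basis k) (basis l) (basis m)) as E.
  rewrite !H, !trilinear_basis in E. unfold sym6. rewrite <- E. ring.
Qed.

Lemma quad_sum_ext (q r : I4 -> I4 -> Cplx) :
  (forall k l, q k l + q l k = r k l + r l k) ->
  forall z : vec, sum4 (fun k => sum4 (fun l => q k l * z k * z l)) =
                  sum4 (fun k => sum4 (fun l => r k l * z k * z l)).
Proof.
  intros H z.
  assert (Hsym : forall s : I4 -> I4 -> Cplx, Cnat 2 * sum4 (fun k => sum4 (fun l => s k l * z k * z l)) =
    sum4 (fun k => sum4 (fun l => (s k l + s l k) * z k * z l))).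
  { intro s. unfold sum4. simpl Cnat. ring. }
  apply (Cmul_reg_l (Cnat 2)); [apply Cnat_neq0; discriminate|].
  rewrite !Hsym. apply sum4_ext; intro k; apply sum4_ext; intro l. rewrite H. reflexivity.
Qed.

Definition dcoef (c : coef2) (k a b l : I4) : Cplx :=
  (c a b k l + c a b l k) - (c k b a l + c k b l a) + (c k a b l + c k a l b).

Definition interior_coef (w : I4 -> R) (c : coef2) (b : I4) : I4 -> I4 -> I4 -> Cplx :=
  fun p q r => RtoC (w p) * c p b q r.

(* Cartan's formula [L_J eta = i_J d eta + d i_J eta] for [J = diagm w], read
   on the monomial [z_k z_l dz_a ^ dz_b]: [L_J] multiplies it by its weight
   [w a + w b + w k + w l], and the [sym6] terms are the coefficients of
   [d i_J eta]. *)
Lemma euler_cartan_coef (w : I4 -> R) (c : coef2) (Halt : alternating_coef c) a b k l :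
  RtoC (w a + w b + w k + w l) * (c a b k l + c a b l k) =
  RtoC (w k) * dcoef c k a b l + RtoC (w l) * dcoef c l a b k
  + sym6 (interior_coef w c b) a k l - sym6 (interior_coef w c a) b k l.
Proof.
  unfold sym6, interior_coef, dcoef. rewrite (Halt b a k l), (Halt b a l k).
  replace (RtoC (w a + w b + w k + w l)) with (RtoC (w a) + RtoC (w b) + RtoC (w k) + RtoC (w l))
    by (apply Cplx_eq; unfold Cadd, RtoC; simpl; ring).
  ring.
Qed.

Definition diagm (w : I4 -> R) : mat :=
  fun i j => if Nat.eqb (idx i) (idx j) then RtoC (w i) else Czero.

Lemma mapply_diagm w z : mapply (diagm w) z = fun i => RtoC (w i) * z i.
Proof. apply functional_extensionality; intro i. destruct i; unfold mapply, diagm, sum4; simpl; ring. Qed.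

Lemma interior_diagm_trilinear w c b z :
  sum4 (fun a => mapply (diagm w) z a * quad_form c a b z) = trilinear (interior_coef w c b) z z z.
Proof. rewrite mapply_diagm. unfold trilinear, interior_coef, quad_form, sum4. ring. Qed.

Lemma d_quad_dcoef c k a b z : d_quad c k a b z = sum4 (fun l => dcoef c k a b l * z l).
Proof. unfold d_quad, dquad, dcoef, sum4. ring. Qed.

Lemma alternating_diag c : alternating_coef c -> forall a k l, c a a k l = Czero.
Proof.
  intros H a k l. apply (Cmul_eq0_reg_l (Cnat 2)); [apply Cnat_neq0; discriminate|].
  transitivity (c a a k l - Copp (c a a k l)); [simpl; ring|]. rewrite <- H. ring.
Qed.

(* Rewriting [c] into [calt c] exposes the antisymmetry of [c] to [ring]. *)
Definition calt (c : coef2) : coef2 := fun a b k l =>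
  if Nat.ltb (idx a) (idx b) then c a b k l
  else if Nat.ltb (idx b) (idx a) then Copp (c b a k l) else Czero.

Lemma calt_alternating c : alternating_coef c -> calt c = c.
Proof.
  intro H. apply functional_extensionality; intro a; apply functional_extensionality; intro b;
  apply functional_extensionality; intro k; apply functional_extensionality; intro l.
  unfold calt. destruct a, b; simpl; rewrite ?alternating_diag by exact H;
  try reflexivity; rewrite (H _ _ k l); ring.
Qed.

Definition curl (c : coef2) : mat := fun i l =>
  match i with
  | i0 => dcoef c i1 i2 i3 l | i1 => Copp (dcoef c i0 i2 i3 l)
  | i2 => dcoef c i0 i1 i3 l | i3 => Copp (dcoef c i0 i1 i2 l)
  end.

Lemma d_quad_curl c : alternating_coef c ->
  forall a b d z, d_quad c a b d z = nu3 (mapply (curl c) z) a b d.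
Proof.
  intros H a b d z. rewrite <- (calt_alternating c H).
  destruct a, b, d; unfold d_quad, dquad, nu3, mapply, curl, dcoef, calt, sum4, eps4; simpl; ring.
Qed.

Lemma interior_nu3 u v a b : sum4 (fun c => u c * nu3 v c a b) = Copp (nu2 u v a b).
Proof. destruct a, b; unfold nu2, nu3, sum4, eps4; simpl; ring. Qed.

Definition weighted (w : I4 -> R) (c : coef2) : coef2 :=
  fun a b k l => RtoC (/ (w a + w b + w k + w l)) * c a b k l.

Lemma weighted_alternating w c : alternating_coef c -> alternating_coef (weighted w c).
Proof.
  intros H a b k l. unfold weighted. rewrite (H a b k l).
  replace (w b + w a + w k + w l)%R with (w a + w b + w k + w l)%R by ring. ring.
Qed.

Lemma dcoef_weighted w c k a b l :
  dcoef (weighted w c) k a b l = RtoC (/ (w a + w b + w k + w l)) * dcoef c k a b l.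
Proof.
  unfold dcoef, weighted.
  replace (w a + w b + w l + w k)%R with (w a + w b + w k + w l)%R by ring.
  replace (w k + w b + w a + w l)%R with (w a + w b + w k + w l)%R by ring.
  replace (w k + w b + w l + w a)%R with (w a + w b + w k + w l)%R by ring.
  replace (w k + w a + w b + w l)%R with (w a + w b + w k + w l)%R by ring.
  replace (w k + w a + w l + w b)%R with (w a + w b + w k + w l)%R by ring.
  ring.
Qed.

Lemma dcoef_diag c : alternating_coef c -> forall k a l, dcoef c k a a l = Czero.
Proof. intros H k a l. unfold dcoef. rewrite !alternating_diag by exact H. rewrite (H k a a l), (H k a l a). ring. Qed.

(* When [i_J eta = 0] and no weight vanishes, dividing [euler_cartan_coef] by
   the weights gives [eta = i_J d eta'] for the weighted form [eta'], and
   [d eta' = i_V nu] with [V = curl eta']. *)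
Theorem division_diagm (w : I4 -> R) (c : coef2)
  (Hw : forall a b, a <> b -> 0 < w a + w b) (Hw0 : forall a, 0 <= w a)
  (Halt : alternating_coef c)
  (Hint : forall z b, sum4 (fun a => mapply (diagm w) z a * quad_form c a b z) = Czero) :
  forall a b z, quad_form c a b z =
    nu2 (mapply (diagm w) z) (mapply (fun i j => Copp (curl (weighted w c) i j)) z) a b.
Proof.
  assert (Hsym : forall b k l m, sym6 (interior_coef w c b) k l m = Czero).
  { intro b. apply trilinear_diag_zero_sym6. intro z. rewrite <- interior_diagm_trilinear. apply Hint. }
  intros a b z.
  transitivity (sum4 (fun k => RtoC (w k) * z k * d_quad (weighted w c) k a b z)).
  2:{ rewrite mapply_diagm.
      transitivity (Copp (nu2 (fun i => RtoC (w i) * z i) (mapply (curl (weighted w c)) z) a b)).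
      - rewrite <- interior_nu3. apply sum4_ext; intro k.
        rewrite (d_quad_curl _ (weighted_alternating w c Halt)). reflexivity.
      - unfold nu2, mapply, sum4. ring. }
  transitivity (sum4 (fun k => sum4 (fun l => (RtoC (w k) * dcoef (weighted w c) k a b l) * z k * z l))).
  2:{ apply sum4_ext; intro k. rewrite d_quad_dcoef. unfold sum4. ring. }
  apply quad_sum_ext. intros k l.
  destruct (classic (a = b)) as [<-|Hab].
  { rewrite !alternating_diag, !dcoef_diag by (try apply weighted_alternating; exact Halt). ring. }
  set (W := (w a + w b + w k + w l)%R).
  assert (HW : W <> 0%R) by (unfold W; specialize (Hw a b Hab); pose proof (Hw0 k); pose proof (Hw0 l); lra).
  rewrite !dcoef_weighted. replace (w a + w b + w l + w k)%R with W by (unfold W; ring). fold W.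
  apply (Cmul_reg_l (RtoC W)).
  { intro E. injection E. intros. apply HW. assumption. }
  unfold W at 1. rewrite (euler_cartan_coef w c Halt), !Hsym.
  transitivity ((RtoC W * RtoC (/ W)) * (RtoC (w k) * dcoef c k a b l + RtoC (w l) * dcoef c l a b k)); [|ring].
  rewrite <- RtoC_mul, Rinv_r by exact HW. change (RtoC 1) with Cone. ring.
Qed.

(* Components of [eta] in new coordinates: the point is moved by [P] and the
   form indices are moved by [Q'], i.e. [eta'(w) = Q'^T eta(P w) Q']. *)
Definition coef_precomp (c : coef2) (P : mat) : coef2 := fun a b k l =>
  sum4 (fun m => sum4 (fun n => c a b m n * P m k * P n l)).
Definition coef_congr (c : coef2) (Q' : mat) : coef2 := fun a b k l =>
  sum4 (fun e => sum4 (fun f => Q' e a * Q' f b * c e f k l)).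

Lemma quad_form_precomp c P a b w : quad_form (coef_precomp c P) a b w = quad_form c a b (mapply P w).
Proof. unfold quad_form, coef_precomp, mapply, sum4. ring. Qed.

Lemma quad_form_congr c Q' a b w :
  quad_form (coef_congr c Q') a b w = sum4 (fun e => sum4 (fun f => Q' e a * Q' f b * quad_form c e f w)).
Proof.
  unfold quad_form, coef_congr.
  transitivity (sum4 (fun k => sum4 (fun l => sum4 (fun e => sum4 (fun f =>
    Q' e a * Q' f b * (c e f k l * w k * w l)))))).
  { apply sum4_ext; intro k; apply sum4_ext; intro l. unfold sum4. ring. }
  rewrite sum4_comm22. apply sum4_ext; intro e; apply sum4_ext; intro f. unfold sum4. ring.
Qed.

Lemma precomp_alternating c P : alternating_coef c -> alternating_coef (coef_precomp c P).
Proof. intros H a b k l. unfold coef_precomp, sum4. rewrite !(H a b). ring. Qed.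

Lemma congr_alternating c Q' : alternating_coef c -> alternating_coef (coef_congr c Q').
Proof. intros H a b k l. rewrite <- (calt_alternating c H). unfold coef_congr, calt, sum4. simpl. ring. Qed.

Lemma interior_congr (c : coef2) (Q Q' : mat) (x z : vec) b :
  sum4 (fun a => mapply Q x a * sum4 (fun e => sum4 (fun f => Q' e a * Q' f b * quad_form c e f z))) =
  sum4 (fun f => Q' f b * sum4 (fun e => mapply (mmul Q' Q) x e * quad_form c e f z)).
Proof. unfold mapply, mmul, sum4. ring. Qed.

Lemma congr_congr (Q Q' : mat) (E : I4 -> I4 -> Cplx) c d :
  sum4 (fun a => sum4 (fun b => Q a c * Q b d * sum4 (fun e => sum4 (fun f => Q' e a * Q' f b * E e f)))) =
  sum4 (fun e => sum4 (fun f => mmul Q' Q e c * mmul Q' Q f d * E e f)).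
Proof. unfold mmul, sum4. ring. Qed.

Lemma congr_mid (E : I4 -> I4 -> Cplx) c d :
  sum4 (fun e => sum4 (fun f => mid e c * mid f d * E e f)) = E c d.
Proof. destruct c, d; unfold mid, sum4; simpl; ring. Qed.

Definition detm (Q : mat) : Cplx :=
  detv (fun i => Q i i0) (fun i => Q i i1) (fun i => Q i i2) (fun i => Q i i3).

Lemma detv_mapply (Q : mat) u v w x :
  detv (mapply Q u) (mapply Q v) (mapply Q w) (mapply Q x) = detm Q * detv u v w x.
Proof. unfold detm, detv, mapply, sum4. ring. Qed.

Lemma detv_basis34 (x y s t : vec) :
  sum4 (fun a => sum4 (fun b => s a * t b * detv x y (basis a) (basis b))) = detv x y s t.
Proof. unfold sum4, detv, basis. simpl. ring. Qed.

Lemma congr_nu2 (Q : mat) (u v : vec) c d :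
  sum4 (fun a => sum4 (fun b => Q a c * Q b d * nu2 (mapply Q u) (mapply Q v) a b)) =
  detm Q * nu2 u v c d.
Proof.
  transitivity (sum4 (fun a => sum4 (fun b =>
    Q a c * Q b d * detv (mapply Q u) (mapply Q v) (basis a) (basis b)))).
  { apply sum4_ext; intro a; apply sum4_ext; intro b. rewrite <- nu_basis2, nu_detv. reflexivity. }
  rewrite (detv_basis34 _ _ (fun i => Q i c) (fun i => Q i d)), <- nu_basis2, nu_detv, <- detv_mapply.
  rewrite !mapply_basis. reflexivity.
Qed.

Lemma nu2_scale_r u v s a b : nu2 u (fun i => s * v i) a b = s * nu2 u v a b.
Proof. unfold nu2, sum4. ring. Qed.

Definition pidw (r : nat) : I4 -> R := fun i => if Nat.ltb (idx i) r then 1%R else 0%R.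

Lemma pidw_nonneg r a : (0 <= pidw r a)%R.
Proof. unfold pidw. destruct (Nat.ltb (idx a) r); lra. Qed.

Lemma pidw_pair_pos r : (3 <= r)%nat -> forall a b, a <> b -> (0 < pidw r a + pidw r b)%R.
Proof.
  intros Hr a b Hab. unfold pidw.
  destruct (Nat.ltb_spec (idx a) r), (Nat.ltb_spec (idx b) r); try lra.
  exfalso. apply Hab. destruct a, b; simpl in *; first [reflexivity | lia].
Qed.

(* de Rham division; in bases putting [X] in rank normal form this is
   [division_diagm]. *)
Theorem division_rank3 (c : coef2) (X : mat) (Halt : alternating_coef c)
  (HiX : forall z b, sum4 (fun a => mapply X z a * quad_form c a b z) = Czero)
  (NF : exists (P P' Q Q' : mat) (r : nat), (3 <= r)%nat /\
    mmul P P' = mid /\ mmul P' P = mid /\ mmul Q Q' = mid /\ mmul Q' Q = mid /\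
    mmul Q (mmul X P) = diagm (pidw r)) :
  exists Y, forall a b z, quad_form c a b z = iY_iX_nu Y X a b z.
Proof.
  destruct NF as (P & P' & Q & Q' & r & Hr & HPP' & HP'P & HQQ' & HQ'Q & HJ).
  set (c' := coef_congr (coef_precomp c P) Q').
  assert (Hc' : forall a b w, quad_form c' a b w =
     sum4 (fun e => sum4 (fun f => Q' e a * Q' f b * quad_form c e f (mapply P w)))).
  { intros a b w. unfold c'. rewrite quad_form_congr. apply sum4_ext; intro e; apply sum4_ext; intro f.
    rewrite quad_form_precomp. reflexivity. }
  assert (HiJ : forall w b, sum4 (fun a => mapply (diagm (pidw r)) w a * quad_form c' a b w) = Czero).
  { intros w b. rewrite <- HJ, mapply_mmul.
    transitivity (sum4 (fun a => mapply Q (mapply (mmul X P) w) a *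
      sum4 (fun e => sum4 (fun f => Q' e a * Q' f b * quad_form c e f (mapply P w)))));
      [apply sum4_ext; intro a; rewrite Hc'; reflexivity|].
    rewrite interior_congr, HQ'Q, mapply_mid, mapply_mmul.
    transitivity (sum4 (fun f => Q' f b * Czero)); [|unfold sum4; ring].
    apply sum4_ext; intro f. rewrite HiX. reflexivity. }
  pose proof (division_diagm (pidw r) c' (pidw_pair_pos r Hr) (pidw_nonneg r)
    (congr_alternating _ Q' (precomp_alternating c P Halt)) HiJ) as HY'.
  set (Y' := fun i j => Copp (curl (weighted (pidw r) c') i j)) in HY'.
  exists (fun i j => detm Q * mmul Q' (mmul Y' P') i j).
  intros c0 d z. unfold iY_iX_nu. rewrite nu_basis2.
  replace (mapply (fun i j => detm Q * mmul Q' (mmul Y' P') i j) z)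
    with (fun i => detm Q * mapply (mmul Q' (mmul Y' P')) z i)
    by (apply functional_extensionality; intro i; unfold mapply, sum4; ring).
  rewrite nu2_scale_r, <- congr_nu2, <- (congr_mid (fun e f => quad_form c e f z)), <- HQ'Q, <- congr_congr.
  apply sum4_ext; intro a; apply sum4_ext; intro b. f_equal.
  transitivity (quad_form c' a b (mapply P' z)).
  { rewrite Hc', <- mapply_mmul, HPP', mapply_mid. reflexivity. }
  rewrite HY', <- HJ, !mapply_mmul, <- (mapply_mmul P P'), HPP', mapply_mid,
    <- (mapply_mmul Q Q'), HQQ', mapply_mid.
  reflexivity.
Qed.

(** * The Lie relation [[Y, X] = (1 - tr Y) X] *)

Lemma nu_swap12 u v w x : nu u v w x = Copp (nu v u w x).
Proof. rewrite !nu_detv. unfold detv. ring. Qed.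

(* The identity [sum_k nu (.., M v_k, ..) = tr M * nu (v_1, .., v_4)] at
   [(v, e_a, e_b, e_d)]. *)
Lemma nu_alternating_sum (M : mat) v a b d :
  nu (mapply M (basis a)) v (basis b) (basis d) - nu (mapply M (basis b)) v (basis a) (basis d)
  + nu (mapply M (basis d)) v (basis a) (basis b)
  = nu (mapply M v) (basis a) (basis b) (basis d) - trace M * nu v (basis a) (basis b) (basis d).
Proof. rewrite !nu_detv. unfold detv, mapply, trace, sum4. ring. Qed.

Definition d_iYiX_field (Y X : mat) : mat := fun i j =>
  trace Y * X i j - trace X * Y i j + (mmul X Y i j - mmul Y X i j).

Lemma nu_d_iYiX_field Y X z u v w :
  nu (mapply (d_iYiX_field Y X) z) u v w =
  nu (mapply X (mapply Y z)) u v w - trace X * nu (mapply Y z) u v w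
  - (nu (mapply Y (mapply X z)) u v w - trace Y * nu (mapply X z) u v w).
Proof. rewrite !nu_detv. unfold detv, d_iYiX_field, mapply, mmul, sum4. ring. Qed.

Lemma mapply_vadd (M : mat) u v : mapply M (vadd u v) = vadd (mapply M u) (mapply M v).
Proof. apply functional_extensionality; intro i. unfold mapply, vadd, sum4; ring. Qed.

Lemma quad_form_polarization c b d k l :
  c b d k l + c b d l k =
  quad_form c b d (vadd (basis k) (basis l)) - quad_form c b d (basis k) - quad_form c b d (basis l).
Proof. destruct k, l; unfold quad_form, vadd, basis, sum4; simpl; ring. Qed.

Section ExteriorDerivative.
Variables (c : coef2) (X Y : mat).
Hypothesis Hdiv : forall a b z, quad_form c a b z = iY_iX_nu Y X a b z.

Lemma dquad_iY_iX a b d z :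
  dquad c a b d z = nu (mapply X (basis a)) (mapply Y z) (basis b) (basis d)
                  + nu (mapply X z) (mapply Y (basis a)) (basis b) (basis d).
Proof.
  unfold dquad.
  transitivity (sum4 (fun l => (nu (mapply X (basis a)) (mapply Y (basis l)) (basis b) (basis d)
                              + nu (mapply X (basis l)) (mapply Y (basis a)) (basis b) (basis d)) * z l)).
  - apply sum4_ext; intro l. f_equal. rewrite quad_form_polarization, !Hdiv. unfold iY_iX_nu.
    rewrite !mapply_vadd, !nu_detv. unfold detv, vadd. ring.
  - unfold sum4. rewrite !mapply_basis, !nu_detv. unfold detv, mapply, sum4. ring.
Qed.

Lemma d_quad_iY_iX a b d z :
  d_quad c a b d z = nu (mapply (d_iYiX_field Y X) z) (basis a) (basis b) (basis d).
Proof.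
  unfold d_quad. rewrite !dquad_iY_iX, nu_d_iYiX_field, <- !nu_alternating_sum, !(nu_swap12 (mapply X z)).
  ring.
Qed.

End ExteriorDerivative.

Lemma nu3_inj u v : (forall a b d, nu3 u a b d = nu3 v a b d) -> u = v.
Proof.
  intro H.
  assert (Hc : forall w : vec, w i0 = nu3 w i1 i2 i3 /\ w i1 = Copp (nu3 w i0 i2 i3) /\
                               w i2 = nu3 w i0 i1 i3 /\ w i3 = Copp (nu3 w i0 i1 i2))
    by (intro w; unfold nu3, sum4, eps4; simpl; repeat split; ring).
  apply functional_extensionality; intro i.
  destruct (Hc u) as (U0 & U1 & U2 & U3), (Hc v) as (V0 & V1 & V2 & V3).
  destruct i; [rewrite U0, V0 | rewrite U1, V1 | rewrite U2, V2 | rewrite U3, V3]; rewrite H; reflexivity.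
Qed.

Lemma mat_ext_mapply (A B : mat) : (forall z, mapply A z = mapply B z) -> A = B.
Proof.
  intro H. mat_ext i j.
  pose proof (f_equal (fun v => v i) (H (basis j))) as E. rewrite !mapply_basis in E. exact E.
Qed.

Lemma d_iYiX_field_of_division (c : coef2) (X Y : mat)
  (Hdiv : forall a b z, quad_form c a b z = iY_iX_nu Y X a b z)
  (HX : forall a b d z, d_quad c a b d z = iX_nu X a b d z) :
  d_iYiX_field Y X = X.
Proof.
  apply mat_ext_mapply; intro z. apply nu3_inj; intros a b d.
  rewrite <- !nu_basis3, <- (d_quad_iY_iX c X Y Hdiv), HX. reflexivity.
Qed.

Lemma trace_d_iYiX_field Y X : trace (d_iYiX_field Y X) = Czero.
Proof. unfold d_iYiX_field, trace, mmul, sum4. ring. Qed.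

Lemma lie_of_d_iYiX_field X Y : d_iYiX_field Y X = X ->
  lie_lin Y X = (fun i j => Csub Cone (trace Y) * X i j).
Proof.
  intro H. assert (HtX : trace X = Czero) by (rewrite <- H; apply trace_d_iYiX_field).
  mat_ext i j. unfold lie_lin.
  transitivity (d_iYiX_field Y X i j - trace Y * X i j + trace X * Y i j); [unfold d_iYiX_field; ring|].
  rewrite H, HtX. ring.
Qed.

(** * Nilpotency *)

Lemma mpow_mmul_comm X k : mmul (mpow X k) X = mmul X (mpow X k).
Proof.
  induction k as [|k IH]; simpl.
  - rewrite mmul_mid_l, mmul_mid_r. reflexivity.
  - rewrite <- mmul_assoc, IH. reflexivity.
Qed.

(* [tr (X^k [Y, X]) = 0] by cyclicity, while [[Y, X] = lam X]. *)
Lemma trace_mpow_lie X Y lam : lie_lin Y X = (fun i j => lam * X i j) -> lam <> Czero ->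
  forall k, trace (mpow X (S k)) = Czero.
Proof.
  intros H Hl k. apply (Cmul_eq0_reg_l lam); [exact Hl|].
  transitivity (trace (mmul (mpow X k) (lie_lin Y X))).
  { rewrite H. simpl mpow. rewrite <- mpow_mmul_comm. unfold trace, mmul, sum4. ring. }
  transitivity (trace (mmul (mmul (mpow X k) X) Y) - trace (mmul (mpow X k) (mmul Y X))).
  { unfold lie_lin, trace, mmul, sum4. ring. }
  rewrite mpow_mmul_comm, <- mmul_assoc, (trace_mmulC X), <- mmul_assoc. ring.
Qed.

(* Cayley–Hamilton for 4x4 matrices, with the characteristic coefficients
   written through the power sums [p_k = tr X^k] (Newton's identities). *)
Lemma cayley_hamilton_newton4 X i j :
  let p k := trace (mpow X k) in
  Cnat 24 * mpow X 4 i j - Cnat 24 * p 1%nat * mpow X 3 i j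
  + Cnat 12 * (p 1%nat * p 1%nat - p 2%nat) * mpow X 2 i j
  - Cnat 4 * (p 1%nat * p 1%nat * p 1%nat - Cnat 3 * p 1%nat * p 2%nat + Cnat 2 * p 3%nat) * mpow X 1 i j
  + (p 1%nat * p 1%nat * p 1%nat * p 1%nat - Cnat 6 * p 1%nat * p 1%nat * p 2%nat
     + Cnat 3 * p 2%nat * p 2%nat + Cnat 8 * p 1%nat * p 3%nat - Cnat 6 * p 4%nat) * mid i j
  = Czero.
Proof.
  intro p. unfold p. simpl mpow. rewrite !mmul_mid_r.
  destruct i, j; unfold trace, mmul, mid, sum4; simpl; ring.
Qed.

Lemma nilpotent_of_traces X : (forall k, trace (mpow X (S k)) = Czero) -> mpow X 4 = mzero.
Proof.
  intro H. mat_ext i j.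
  pose proof (cayley_hamilton_newton4 X i j) as E. cbv beta zeta in E.
  rewrite (H 0%nat), (H 1%nat), (H 2%nat), (H 3%nat) in E.
  apply (Cmul_eq0_reg_l (Cnat 24)); [apply Cnat_neq0; discriminate|].
  rewrite <- E. unfold mzero. ring.
Qed.

(** * Jordan chains *)

Definition lin4 (a b c d : Cplx) (p q r s : vec) : vec :=
  fun i => a * p i + b * q i + c * r i + d * s i.

Lemma mapply_lin4 M a b c d p q r s :
  mapply M (lin4 a b c d p q r s) = lin4 a b c d (mapply M p) (mapply M q) (mapply M r) (mapply M s).
Proof. apply functional_extensionality; intro i. unfold lin4, mapply, sum4. ring. Qed.

Definition colmat (w1 w2 w3 w4 : vec) : mat := fun i k =>
  match k with i0 => w1 i | i1 => w2 i | i2 => w3 i | i3 => w4 i end.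

Lemma mapply_colmat w1 w2 w3 w4 al :
  mapply (colmat w1 w2 w3 w4) al = lin4 (al i0) (al i1) (al i2) (al i3) w1 w2 w3 w4.
Proof. apply functional_extensionality; intro i. unfold mapply, colmat, lin4, sum4. ring. Qed.

Section Chain.
Variables (X : mat) (w1 w2 w3 w4 : vec).
Hypotheses (E2 : mapply X w1 = w2) (E3 : mapply X w2 = w3) (E4 : mapply X w3 = w4)
  (E5 : mapply X w4 = vzero).

Lemma colmat_chain_inj a0 : w4 a0 <> Czero ->
  forall al, mapply (colmat w1 w2 w3 w4) al = vzero -> al = vzero.
Proof.
  intros Hnz al H. rewrite mapply_colmat in H.
  set (x0 := al i0) in *. set (x1 := al i1) in *. set (x2 := al i2) in *. set (x3 := al i3) in *.
  assert (Z1 : lin4 x0 x1 x2 x3 w2 w3 w4 vzero = vzero).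
  { transitivity (mapply X (lin4 x0 x1 x2 x3 w1 w2 w3 w4));
      [rewrite mapply_lin4, E2, E3, E4, E5 | rewrite H; apply mapply_vzero]; reflexivity. }
  assert (Z2 : lin4 x0 x1 x2 x3 w3 w4 vzero vzero = vzero).
  { transitivity (mapply X (lin4 x0 x1 x2 x3 w2 w3 w4 vzero));
      [rewrite mapply_lin4, E3, E4, E5, mapply_vzero | rewrite Z1; apply mapply_vzero]; reflexivity. }
  assert (Z3 : lin4 x0 x1 x2 x3 w4 vzero vzero vzero = vzero).
  { transitivity (mapply X (lin4 x0 x1 x2 x3 w3 w4 vzero vzero));
      [rewrite mapply_lin4, E4, E5, mapply_vzero | rewrite Z2; apply mapply_vzero]; reflexivity. }
  assert (at_a0 : forall v : vec, v = vzero -> v a0 = Czero) by (intros v ->; reflexivity).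
  apply at_a0 in H, Z1, Z2, Z3. unfold lin4, vzero in H, Z1, Z2, Z3.
  assert (A0 : x0 = Czero) by (apply (Cmul_eq0_reg_l (w4 a0)); [exact Hnz | rewrite <- Z3; ring]).
  assert (A1 : x1 = Czero) by (apply (Cmul_eq0_reg_l (w4 a0)); [exact Hnz | rewrite <- Z2, A0; ring]).
  assert (A2 : x2 = Czero) by (apply (Cmul_eq0_reg_l (w4 a0)); [exact Hnz | rewrite <- Z1, A0, A1; ring]).
  assert (A3 : x3 = Czero) by (apply (Cmul_eq0_reg_l (w4 a0)); [exact Hnz | rewrite <- H, A0, A1, A2; ring]).
  apply functional_extensionality; intro i. destruct i; assumption.
Qed.

Lemma colmat_chain_X : mmul X (colmat w1 w2 w3 w4) = mmul (colmat w1 w2 w3 w4) Nshift.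
Proof.
  mat_ext i k.
  transitivity (mapply X (match k with i0 => w1 | i1 => w2 | i2 => w3 | i3 => w4 end) i);
    [destruct k; reflexivity|].
  destruct k; [rewrite E2|rewrite E3|rewrite E4|rewrite E5]; unfold mmul, colmat, Nshift, vzero, sum4; ring.
Qed.

End Chain.

Lemma lie_shift X Y lam (Hlie : lie_lin Y X = (fun i j => lam * X i j)) u :
  mapply Y (mapply X u) = fun i => mapply X (mapply Y u) i - lam * mapply X u i.
Proof.
  apply functional_extensionality; intro i. rewrite <- !mapply_mmul.
  assert (E : forall j, mmul Y X i j = mmul X Y i j - lam * X i j).
  { intro j. transitivity (mmul X Y i j - lie_lin Y X i j); [unfold lie_lin; ring | rewrite Hlie; reflexivity]. }
  unfold mapply at 1. unfold sum4. rewrite !E. unfold mapply, sum4. ring.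
Qed.

Lemma eigen_shift X Y lam (Hlie : lie_lin Y X = (fun i j => lam * X i j)) v mu :
  mapply Y v = (fun i => mu * v i) -> mapply Y (mapply X v) = (fun i => (mu - lam) * mapply X v i).
Proof.
  intro Hv. rewrite (lie_shift X Y lam Hlie), Hv.
  apply functional_extensionality; intro i. unfold mapply, sum4. ring.
Qed.

Lemma colmat_eigen (Y : mat) rho lam w1 w2 w3 w4
  (E1 : mapply Y w1 = (fun i => rho * w1 i))
  (E2 : mapply Y w2 = (fun i => (rho - lam) * w2 i))
  (E3 : mapply Y w3 = (fun i => (rho - lam - lam) * w3 i))
  (E4 : mapply Y w4 = (fun i => (rho - lam - lam - lam) * w4 i)) :
  mmul Y (colmat w1 w2 w3 w4) = mmul (colmat w1 w2 w3 w4) (Ydiag rho lam).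
Proof.
  mat_ext i k.
  transitivity (mapply Y (match k with i0 => w1 | i1 => w2 | i2 => w3 | i3 => w4 end) i);
    [destruct k; reflexivity|].
  destruct k; [rewrite E1|rewrite E2|rewrite E3|rewrite E4]; unfold mmul, colmat, Ydiag, sum4;
  rewrite <- !Cnat_RtoC; simpl; ring.
Qed.

Lemma trace_Ydiag rho lam : trace (Ydiag rho lam) = Cnat 4 * rho - Cnat 6 * lam.
Proof. unfold trace, Ydiag, sum4. rewrite <- !Cnat_RtoC. simpl. ring. Qed.

Lemma similar_normal_form (X Y P Q N D : mat) (HPQ : mmul P Q = mid) (HQP : mmul Q P = mid)
  (HX : mmul X P = mmul P N) (HY : mmul Y P = mmul P D) :
  mmul Q (mmul X P) = N /\ mmul Q (mmul Y P) = D /\ trace Y = trace D.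
Proof.
  assert (HD : mmul Q (mmul Y P) = D) by (rewrite HY, mmul_assoc, HQP, mmul_mid_l; reflexivity).
  split; [|split; [exact HD|]].
  - rewrite HX, mmul_assoc, HQP, mmul_mid_l. reflexivity.
  - rewrite <- HD, trace_mmulC, <- mmul_assoc, HPQ, mmul_mid_r. reflexivity.
Qed.

Lemma mapply_mpow_S X n v : mapply (mpow X (S n)) v = mapply X (mapply (mpow X n) v).
Proof. apply mapply_mmul. Qed.

Section JordanChain.
Variables (X Y : mat) (lam : Cplx).
Hypotheses (Hlie : lie_lin Y X = (fun i j => lam * X i j)) (Hlam : lam <> Czero)
  (HX4 : mpow X 4 = mzero).
Hypothesis Hinv : forall P : mat, (forall u, mapply P u = vzero -> u = vzero) ->
  exists Q, mmul P Q = mid /\ mmul Q P = mid.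

Lemma mapply_X4_zero v : mapply X (mapply X (mapply X (mapply X v))) = vzero.
Proof.
  transitivity (mapply (mpow X 4) v).
  { rewrite !mapply_mpow_S. simpl mpow. rewrite mapply_mid. reflexivity. }
  rewrite HX4. apply functional_extensionality; intro i. unfold mapply, mzero, vzero, sum4. ring.
Qed.

Lemma normal_form_of_eigen_chain v rho a0 :
  mapply Y v = (fun i => rho * v i) -> mapply X (mapply X (mapply X v)) a0 <> Czero ->
  exists P Q, mmul P Q = mid /\ mmul Q P = mid /\ mmul Q (mmul X P) = Nshift /\
    mmul Q (mmul Y P) = Ydiag rho lam /\ trace Y = Cnat 4 * rho - Cnat 6 * lam.
Proof.
  intros Hv Hnz.
  set (P := colmat v (mapply X v) (mapply X (mapply X v)) (mapply X (mapply X (mapply X v)))).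
  destruct (Hinv P (colmat_chain_inj X _ _ _ _ eq_refl eq_refl eq_refl (mapply_X4_zero v) a0 Hnz))
    as [Q [HPQ HQP]].
  pose proof (eigen_shift X Y lam Hlie _ _ Hv) as Hv2.
  pose proof (eigen_shift X Y lam Hlie _ _ Hv2) as Hv3.
  pose proof (eigen_shift X Y lam Hlie _ _ Hv3) as Hv4.
  destruct (similar_normal_form X Y P Q Nshift (Ydiag rho lam) HPQ HQP
    (colmat_chain_X X _ _ _ _ eq_refl eq_refl eq_refl (mapply_X4_zero v))
    (colmat_eigen Y rho lam _ _ _ _ Hv Hv2 Hv3 Hv4)) as (HN & HD & Htr).
  exists P, Q. repeat split; try assumption. rewrite Htr. apply trace_Ydiag.
Qed.

(* Starting from [u] with [X^3 u <> 0], the chain [u, Xu, X^2 u, X^3 u] is a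
   basis in which [Y] is triangular with the distinct diagonal entries
   [a1, a1 - lam, a1 - 2 lam, a1 - 3 lam]; we correct [u] to an eigenvector. *)
Lemma eigenvector_of_cube b a0 : mpow X 3 a0 b <> Czero ->
  exists v rho, mapply Y v = (fun i => rho * v i) /\ mapply X (mapply X (mapply X v)) a0 <> Czero.
Proof.
  intro Hab.
  set (u1 := basis b). set (u2 := mapply X u1). set (u3 := mapply X u2). set (u4 := mapply X u3).
  assert (Hu5 : mapply X u4 = vzero) by apply mapply_X4_zero.
  assert (Hnz : u4 a0 <> Czero).
  { replace (u4 a0) with (mpow X 3 a0 b); [exact Hab|].
    change (mpow X 3 a0 b) with ((fun i => mpow X 3 i b) a0).
    rewrite <- mapply_basis, !mapply_mpow_S. simpl mpow. rewrite mapply_mid. reflexivity. }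
  destruct (Hinv (colmat u1 u2 u3 u4) (colmat_chain_inj X u1 u2 u3 u4 eq_refl eq_refl eq_refl Hu5 a0 Hnz))
    as [Q0 [HPQ0 _]].
  set (al := mapply Q0 (mapply Y u1)).
  assert (HYu1 : mapply Y u1 = lin4 (al i0) (al i1) (al i2) (al i3) u1 u2 u3 u4).
  { rewrite <- mapply_colmat. unfold al. rewrite <- mapply_mmul, HPQ0, mapply_mid. reflexivity. }
  set (a1 := al i0) in *. set (a2 := al i1) in *. set (a3 := al i2) in *. set (a4 := al i3) in *.
  assert (HYu2 : mapply Y u2 = lin4 (a1 - lam) a2 a3 Czero u2 u3 u4 u4).
  { unfold u2 at 1. rewrite (lie_shift X Y lam Hlie), HYu1, mapply_lin4. fold u2 u3 u4. rewrite Hu5.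
    apply functional_extensionality; intro i. unfold lin4, vzero. ring. }
  assert (HYu3 : mapply Y u3 = lin4 (a1 - lam - lam) a2 Czero Czero u3 u4 u4 u4).
  { unfold u3 at 1. rewrite (lie_shift X Y lam Hlie), HYu2, mapply_lin4. fold u3 u4. rewrite Hu5.
    apply functional_extensionality; intro i. unfold lin4, vzero. ring. }
  assert (HYu4 : mapply Y u4 = lin4 (a1 - lam - lam - lam) Czero Czero Czero u4 u4 u4 u4).
  { unfold u4 at 1. rewrite (lie_shift X Y lam Hlie), HYu3, mapply_lin4. fold u4. rewrite Hu5.
    apply functional_extensionality; intro i. unfold lin4, vzero. ring. }
  set (b2 := Cdiv a2 lam).
  set (b3 := Cdiv (a3 + b2 * a2) (Cnat 2 * lam)).
  set (b4 := Cdiv (a4 + b2 * a3 + b3 * a2) (Cnat 3 * lam)).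
  exists (lin4 Cone b2 b3 b4 u1 u2 u3 u4), a1. split.
  - rewrite mapply_lin4, HYu1, HYu2, HYu3, HYu4.
    apply functional_extensionality; intro i. unfold lin4, b4, b3, b2, Cdiv. simpl Cnat.
    field. repeat split; try exact Hlam; intro E; injection E; intros; lra.
  - rewrite !mapply_lin4. fold u2 u3 u4. rewrite Hu5, !mapply_vzero.
    unfold lin4, vzero. replace (Cone * u4 a0 + b2 * Czero + b3 * Czero + b4 * Czero) with (u4 a0) by ring.
    exact Hnz.
Qed.

Theorem jordan_normal_form_of_lie : (exists a b, mpow X 3 a b <> Czero) ->
  exists P Q rho, mmul P Q = mid /\ mmul Q P = mid /\ mmul Q (mmul X P) = Nshift /\
    mmul Q (mmul Y P) = Ydiag rho lam /\ trace Y = Cnat 4 * rho - Cnat 6 * lam.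
Proof.
  intros (a0 & b & Hab).
  destruct (eigenvector_of_cube b a0 Hab) as (v & rho & Hv & Hnz).
  destruct (normal_form_of_eigen_chain v rho a0 Hv Hnz) as (P & Q & HP).
  exists P, Q, rho. exact HP.
Qed.

End JordanChain.

Lemma lie_lin_swap_zero X Y : lie_lin Y X = (fun i j => Czero * X i j) -> lie_lin X Y = mzero.
Proof.
  intro H. mat_ext i j. unfold mzero.
  transitivity (Copp (lie_lin Y X i j)); [unfold lie_lin; ring | rewrite H; ring].
Qed.

Lemma rho_lambda_relation t rho lam :
  lam = Csub Cone t -> t = Cnat 4 * rho - Cnat 6 * lam ->
  Csub (Cmul (RtoC 4) rho) (Cmul (RtoC 5) lam) = Cone.
Proof.
  intros Hl Ht.
  replace (RtoC 4) with (Cnat 4) by (rewrite Cnat_RtoC; f_equal; simpl; lra).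
  replace (RtoC 5) with (Cnat 5) by (rewrite Cnat_RtoC; f_equal; simpl; lra).
  transitivity ((Cnat 4 * rho - Cnat 6 * lam - t) + (lam - (Cone - t)) + Cone); [simpl Cnat; ring|].
  rewrite <- Ht, <- Hl. ring.
Qed.

From mathcomp Require Import all_boot all_algebra.
From mathcomp Require Import Rstruct complex zify.
Import GRing.Theory.
Local Open Scope ring_scope.

Definition toF (x : Cplx) : R[i] := Complex (fst x) (snd x).
Definition ofF (z : R[i]) : Cplx := let: Complex a b := z in (a, b).

Lemma toF_add x y : toF (Cadd x y) = toF x + toF y. Proof. by case: x; case: y. Qed.
Lemma toF_mul x y : toF (Cmul x y) = toF x * toF y. Proof. by case: x; case: y. Qed.
Lemma toF_zero : toF Czero = 0. Proof. by []. Qed.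
Lemma toFK : cancel toF ofF. Proof. by case. Qed.
Lemma ofFK : cancel ofF toF. Proof. by case. Qed.
Lemma toF_inj : injective toF. Proof. exact: can_inj toFK. Qed.

Definition i4of (i : 'I_4) : I4 :=
  match nat_of_ord i with 0 => i0 | 1 => i1 | 2 => i2 | _ => i3 end%N.
Definition ordof (a : I4) : 'I_4 := inord (idx a).

Lemma i4ofK : cancel ordof i4of. Proof. by case; rewrite /i4of /ordof inordK. Qed.
Lemma ordofK : cancel i4of ordof.
Proof. by case=> [[|[|[|[|n]]]] Hi]; apply/val_inj; rewrite /ordof /i4of /= ?inordK. Qed.

Lemma toF_sum4 (g : I4 -> Cplx) : toF (sum4 g) = \sum_(k < 4) toF (g (i4of k)).
Proof.
  rewrite !big_ord_recr big_ord0 /= add0r /sum4 !toF_add.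
  by congr (_ + _ + _ + _); congr (toF (g _)); rewrite /i4of /=.
Qed.

(* [mat] acts on column vectors; MathComp matrices act on row vectors, hence
   the transposition in [toMt]. *)
Definition toMt (A : mat) : 'M[R[i]]_4 := \matrix_(i, j) toF (A (i4of j) (i4of i)).
Definition ofMt (M : 'M[R[i]]_4) : mat := fun a b => ofF (M (ordof b) (ordof a)).

Lemma toMtK : cancel toMt ofMt.
Proof.
  move=> A; apply: functional_extensionality => a; apply: functional_extensionality => b.
  by rewrite /ofMt /toMt mxE !i4ofK toFK.
Qed.
Lemma ofMtK : cancel ofMt toMt.
Proof. by move=> M; apply/matrixP => i j; rewrite /ofMt /toMt mxE ofFK !ordofK. Qed.
Lemma toMt_inj : injective toMt. Proof. exact: can_inj toMtK. Qed.

Lemma toMt_mul A B : toMt (mmul A B) = toMt B *m toMt A.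
Proof.
  apply/matrixP => i j; rewrite /toMt !mxE /mmul toF_sum4.
  by apply: eq_bigr => k _; rewrite !mxE toF_mul mulrC.
Qed.

Lemma toMt_mid : toMt mid = 1%:M.
Proof.
  by apply/matrixP => i j; rewrite /toMt !mxE /mid;
  case: i => [[|[|[|[|n]]]] Hi]; case: j => [[|[|[|[|m]]]] Hj].
Qed.

Lemma toMt_zero : toMt mzero = 0. Proof. by apply/matrixP => i j; rewrite /toMt !mxE. Qed.

Lemma toMt_mpow X n : toMt (mpow X n) = toMt X ^+ n.
Proof. by elim: n => [|n IH] /=; rewrite ?toMt_mid ?expr0 // toMt_mul IH exprSr mulmxE. Qed.

Lemma ltb_ltn k r : Nat.ltb k r = (k < r)%N.
Proof. by apply/idP/idP => [/Nat.ltb_lt/ltP | /ltP/Nat.ltb_lt]. Qed.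

Lemma toMt_diagm_pidw r : toMt (diagm (pidw r)) = pid_mx r.
Proof.
  apply/matrixP => i j; rewrite /toMt !mxE /diagm /pidw.
  by case: i => [[|[|[|[|n]]]] Hi]; case: j => [[|[|[|[|m]]]] Hj] //=; rewrite ltb_ltn; case: ltnP.
Qed.

Definition toVr (z : vec) : 'rV[R[i]]_4 := \row_j toF (z (i4of j)).
Definition ofVr (u : 'rV[R[i]]_4) : vec := fun a => ofF (u 0 (ordof a)).

Lemma ofVrK : cancel ofVr toVr.
Proof. by move=> u; apply/matrixP => i j; rewrite /toVr /ofVr mxE ofFK ordofK (ord1 i). Qed.

Lemma toVr_mapply A z : toVr z *m toMt A = toVr (mapply A z).
Proof.
  apply/matrixP => i j; rewrite /toVr /toMt !mxE /mapply toF_sum4.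
  by apply: eq_bigr => k _; rewrite !mxE toF_mul mulrC.
Qed.

Lemma toVr_zero : toVr vzero = 0. Proof. by apply/matrixP => i j; rewrite /toVr !mxE. Qed.

Lemma kermx_row_mapply A (u : 'rV[R[i]]_4) : u *m toMt A = 0 -> mapply A (ofVr u) = vzero.
Proof.
  rewrite -{1}(ofVrK u) toVr_mapply => Hu; apply: functional_extensionality => a; apply: toF_inj.
  by have := congr1 (fun M : 'rV[R[i]]_4 => M 0 (ordof a)) Hu; rewrite /toVr !mxE i4ofK.
Qed.

Lemma rank_ge3 X : codim_ge3 (Sing X) -> (3 <= \rank (toMt X))%N.
Proof.
  case=> w Hw; set A := toMt X.
  have sub : (kermx A <= toVr w)%MS.
  { apply/row_subP => i.
    have /kermx_row_mapply Hz : row i (kermx A) *m A = 0 by rewrite -row_mul mulmx_ker row0.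
    have [c Hc] := Hw _ (fun a => congr1 (fun v => v a) Hz).
    rewrite -(ofVrK (row i (kermx A))).
    have -> : toVr (ofVr (row i (kermx A))) = toF c *: toVr w.
    { by apply/matrixP => i' j; rewrite /toVr !mxE Hc toF_mul. }
    exact/scalemx_sub/submx_refl. }
  have := mxrankS sub; rewrite mxrank_ker.
  have := rank_leq_row (toVr w); have := rank_leq_row A; lia.
Qed.

Lemma rank_normal_form X : codim_ge3 (Sing X) ->
  exists (P P' Q Q' : mat) (r : nat), (3 <= r)%coq_nat /\
    mmul P P' = mid /\ mmul P' P = mid /\ mmul Q Q' = mid /\ mmul Q' Q = mid /\
    mmul Q (mmul X P) = diagm (pidw r).
Proof.
  move=> /rank_ge3 Hr; set A := toMt X in Hr.
  have HL := col_ebase_unit A; have HU := row_ebase_unit A.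
  exists (ofMt (invmx (col_ebase A))), (ofMt (col_ebase A)),
         (ofMt (invmx (row_ebase A))), (ofMt (row_ebase A)), (\rank A).
  have inv M : M \in unitmx ->
    mmul (ofMt (invmx M)) (ofMt M) = mid /\ mmul (ofMt M) (ofMt (invmx M)) = mid.
  { by move=> HM; split; apply: toMt_inj; rewrite toMt_mul !ofMtK ?mulmxV ?mulVmx // toMt_mid. }
  have [? ?] := inv _ HL; have [? ?] := inv _ HU.
  split; first exact/leP.
  do !split => //; apply: toMt_inj; rewrite toMt_diagm_pidw !toMt_mul !ofMtK -/A.
  have E := mulmx_ebase A; set L := col_ebase A in HL E *; set U := row_ebase A in HU E *.
  by rewrite -{1}E !mulmxA mulVmx // mul1mx -mulmxA mulmxV // mulmx1.
Qed.

Lemma cube_neq0_of_nilpotent X : codim_ge3 (Sing X) -> mpow X 4 = mzero ->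
  exists a b, mpow X 3 a b <> Czero.
Proof.
  move=> /rank_ge3 Hr H4; set A := toMt X in Hr.
  have A4 : A *m A *m A *m A = 0.
  { by rewrite !mulmxE -expr2 -!exprSr /A -toMt_mpow H4 toMt_zero. }
  (* Sylvester's inequality along [A, A^2, A^3, A^4 = 0] with [rank A >= 3];
     the ranks are generalized so that [lia] sees one atom for each. *)
  have R1 := rank_leq_row A; have R2 := mxrank_mul_min A A.
  have R3 := mxrank_mul_min (A *m A) A; have R4 := mxrank_mul_min (A *m A *m A) A.
  rewrite A4 mxrank0 in R4.
  have nz : A *m A *m A != 0.
  { rewrite -mxrank_eq0 -lt0n; move: R1 R2 R3 R4 Hr.
    move: (\rank A) (\rank (A *m A)) (\rank (A *m A *m A)) => r r2 r3; lia. }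
  have : toMt (mpow X 3) != 0 by rewrite toMt_mpow !exprSr expr0 mul1r -!mulmxE.
  case/matrix0Pn=> i [j]; rewrite /toMt mxE => Hij.
  by exists (i4of j), (i4of i) => Hc; rewrite Hc toF_zero eqxx in Hij.
Qed.

Lemma invertible_of_injective P : (forall u, mapply P u = vzero -> u = vzero) ->
  exists Q, mmul P Q = mid /\ mmul Q P = mid.
Proof.
  move=> Hinj; set A := toMt P.
  have K0 : kermx A = 0.
  { apply/row_matrixP => i; rewrite row0 -(ofVrK (row i (kermx A))).
    have /kermx_row_mapply/Hinj -> : row i (kermx A) *m A = 0 by rewrite -row_mul mulmx_ker row0.
    exact: toVr_zero. }
  have HU : A \in unitmx by rewrite -row_free_unit -kermx_eq0 K0.
  by exists (ofMt (invmx A)); split; apply: toMt_inj; rewrite toMt_mul ofMtK ?mulVmx ?mulmxV // toMt_mid.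
Qed.

Local Close Scope ring_scope.

Theorem lemma2 (c : coef2) (X : mat)
  (Halt : alternating_coef c)
  (Hint : integrable2 (quad_form c))
  (Hdnz : exists a b d z, d_quad c a b d z <> Czero)
  (HX : forall a b d z, d_quad c a b d z = iX_nu X a b d z)
  (Hsing : codim_ge3 (Sing X)) :
  exists Y : mat,
    let lam := Csub Cone (trace Y) in
    (forall a b z, quad_form c a b z = iY_iX_nu Y X a b z) /\
    lie_lin Y X = (fun i j => Cmul lam (X i j)) /\
    (~ nilpotent X -> lam = Czero /\ trace Y = Cone /\ lie_lin X Y = mzero) /\
    (nilpotent X -> lam <> Czero ->
       exists (P Q : mat) (rho : Cplx),
         mmul P Q = mid /\ mmul Q P = mid /\
         mmul Q (mmul X P) = Nshift /\
         mmul Q (mmul Y P) = Ydiag rho lam /\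
         Csub (Cmul (RtoC 4) rho) (Cmul (RtoC 5) lam) = Cone).
Proof.
  have [Y HY] := division_rank3 c X Halt (integrable_interior_zero c X Hint HX) (rank_normal_form X Hsing).
  exists Y => lam.
  have Hlie : lie_lin Y X = (fun i j => Cmul lam (X i j))
    by exact: lie_of_d_iYiX_field (d_iYiX_field_of_division c X Y HY HX).
  have Hnil : lam <> Czero -> mpow X 4 = mzero
    by move=> Hl; exact: nilpotent_of_traces (trace_mpow_lie X Y lam Hlie Hl).
  split; [exact: HY | split; [exact: Hlie | split]].
  - move=> Hnot.
    have Hl0 : lam = Czero by apply: NNPP => Hl; apply: Hnot; exists 4%nat; exact: Hnil.
    split; [exact: Hl0 | split; [exact: esym (Csub_eq0 _ _ Hl0) | apply: lie_lin_swap_zero; rewrite -Hl0; exact: Hlie]].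
  - move=> _ Hl.
    have [P [Q [rho [HPQ [HQP [HN [HD Htr]]]]]]] := jordan_normal_form_of_lie X Y lam Hlie Hl (Hnil Hl)
      invertible_of_injective (cube_neq0_of_nilpotent X Hsing (Hnil Hl)).
    exists P, Q, rho; do 4 (split; first by []).
    exact: rho_lambda_relation (trace Y) rho lam erefl Htr.
Qed.
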